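(* Let $m,n\ge 1$ and let $B\subseteq [m]\times[n]$ be a board. Let $I\subseteq[m]$ with $|I|=s$ and $J\subseteq[n]$ with $|J|=t$ be such that the subboard $S=B\cap(I\times J)$ is a block of $B$, i.e. (1) for all $i,i'\in I$ and all $c\in[n]\setminus J$: $(i,c)\in B \iff (i',c)\in B$; and (2) for all $a\in[m]\setminus I$ and all $j,j'\in J$: $(a,j)\in B\iff(a,j')\in B$. For $0\le j\le \min(s,t)$ and any choice of subsets $I'\subseteq I$, $J'\subseteq J$ with $|I'|=|J'|=j$, let $$B_{S,j}=\{(a,b)\in B:\ a\notin I',\ b\notin J',\ (a,b)\notin I\times J\}$$ (the $j$-th inclusion board of $B$ relative to $S$). Then $R(B_{S,j};x)$ does not depend on the choice of $I',J'$, and $$R(B;x)=\sum_{j=0}^{\min(s,t)} r_j(S)\,x^j\,R(B_{S,j};x),$$ where $r_j(S)$ is the coefficient of $x^j$ in $R(S;x)$.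
   Context: A board is a finite set of cells $B\subseteq[m]\times[n]$ (rows indexed by $[m]=\{1,\dots,m\}$, columns by $[n]$). A placement of $k$ non-attacking rooks on $B$ is a set of $k$ cells $\{(x_1,y_1),\dots,(x_k,y_k)\}\subseteq B$ such that $x_i=x_j$ or $y_i=y_j$ implies $i=j$. For $k\ge 0$, $r_k(B)$ denotes the number of such placements (with $r_0(B)=1$), and the rook polynomial of $B$ is $R(B;x)=\sum_{k\ge 0} r_k(B)x^k$. The same definitions apply to any set of cells, in particular to $S$ and to $B_{S,j}$. *)

From HB Require Import structures.
From mathcomp Require Import all_boot all_order all_algebra.
Set Implicit Arguments. Unset Strict Implicit. Unset Printing Implicit Defensive.
Import GRing.Theory.
Local Open Scope ring_scope.

(* Cells of [m] x [n] are pairs ('I_m * 'I_n); rows/columns are indexed 0..m-1, 0..n-1. *)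
Definition cell (m n : nat) := ('I_m * 'I_n)%type.

Definition nonattacking m n (P : {set cell m n}) : bool :=
  [forall p in P, forall q in P, ((p.1 == q.1) || (p.2 == q.2)) ==> (p == q)].

Definition rook_num m n (k : nat) (B : {set cell m n}) : nat :=
  #|[set P : {set cell m n} | (P \subset B) && nonattacking P && (#|P| == k)]|.

(* R(B;x) = sum_k r_k(B) x^k  (r_k(B) = 0 for k > |B|). *)
Definition rook_poly m n (B : {set cell m n}) : {poly int} :=
  \sum_(k < #|B|.+1) (rook_num k B)%:R *: 'X^k.

Definition is_block m n (B : {set cell m n}) (I : {set 'I_m}) (J : {set 'I_n}) : Prop :=
  (forall (i i' : 'I_m) (c : 'I_n), i \in I -> i' \in I -> c \notin J ->
      ((i, c) \in B) = ((i', c) \in B)) /\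
  (forall (a : 'I_m) (j j' : 'I_n), a \notin I -> j \in J -> j' \in J ->
      ((a, j) \in B) = ((a, j') \in B)).

Definition subboard m n (B : {set cell m n}) (I : {set 'I_m}) (J : {set 'I_n}) :=
  [set p in B | (p.1 \in I) && (p.2 \in J)].

Definition inclusion_board m n (B : {set cell m n}) (I : {set 'I_m}) (J : {set 'I_n})
    (I' : {set 'I_m}) (J' : {set 'I_n}) : {set cell m n} :=
  [set p in B | (p.1 \notin I') && (p.2 \notin J') && ~~ ((p.1 \in I) && (p.2 \in J))].

From HB Require Import structures.
From mathcomp Require Import all_boot all_order all_algebra.
From mathcomp Require Import fingroup perm.
Set Implicit Arguments. Unset Strict Implicit. Unset Printing Implicit Defensive.
Import GRing.Theory.
Local Open Scope ring_scope.

(* A rook placement on B splits into its part PS inside the rectangle I x J and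
   the rest Q, and Q is then an arbitrary placement on the board obtained from B
   by deleting the rectangle and the rows and columns occupied by PS; so
   R(B;x) = sum_PS x^|PS| R(B_PS;x) for every board.  When S is a block, the rows
   of I agree outside J and the columns of J agree outside I, so permuting rows
   within I and columns within J carries the inclusion board for (I', J') onto
   the one for the images of I' and J'.  Hence R(B_PS;x) only depends on |PS|,
   and grouping the placements PS by size gives the formula. *)

Lemma sum_set_by_card (T : finType) (V : nmodType) (p : pred {set T}) (N : nat)
    (F : nat -> V) :
  (forall P, p P -> #|P| <= N)%N ->
  \sum_(P | p P) F #|P| = \sum_(k < N.+1) F k *+ #|[set P | p P & #|P| == k]|.
Proof.
move=> leN; rewrite (partition_big (fun P : {set T} => inord #|P| : 'I_N.+1) xpredT) //=.
apply: eq_bigr => k _; rewrite -sumr_const; apply: eq_big => P.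
  rewrite inE; apply/andP/andP => -[pP /eqP kP]; split => //; apply/eqP.
    by rewrite -kP inordK ?ltnS ?leN.
  by apply: val_inj; rewrite /= inordK ?ltnS ?leN ?kP.
by case/andP=> pP /eqP <-; rewrite inordK ?ltnS ?leN.
Qed.

Section Placements.
Variables m n : nat.
Implicit Types B P Q : {set cell m n}.

Definition rook_placement B P := (P \subset B) && nonattacking P.

Lemma nonattackingP P :
  reflect {in P &, forall p q, (p.1 == q.1) || (p.2 == q.2) -> p = q}
          (nonattacking P).
Proof.
apply: (iffP forallP) => [na p q pP qP pq | na p].
  by move: (na p); rewrite pP => /forallP /(_ q); rewrite qP pq => /eqP.
by apply/implyP=> pP; apply/forallP=> q; apply/implyP=> qP; apply/implyP=> /na ->.
Qed.

Lemma rook_polyE B : rook_poly B = \sum_(P | rook_placement B P) 'X^#|P|.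
Proof.
rewrite (sum_set_by_card (fun k => 'X^k) (N := #|B|)) => [|P /andP[PB _]].
  by apply: eq_bigr => k _; rewrite scaler_nat.
exact: subset_leq_card.
Qed.

Lemma card_rows_placement P : nonattacking P -> #|[set p.1 | p in P]| = #|P|.
Proof.
move/nonattackingP=> na; apply: card_in_imset => p q pP qP pq.
by apply: na; rewrite ?pq ?eqxx.
Qed.

Lemma card_cols_placement P : nonattacking P -> #|[set p.2 | p in P]| = #|P|.
Proof.
move/nonattackingP=> na; apply: card_in_imset => p q pP qP pq.
by apply: na; rewrite ?pq ?eqxx ?orbT.
Qed.

Lemma nonattackingS P Q : P \subset Q -> nonattacking Q -> nonattacking P.
Proof.
move=> /subsetP PQ /nonattackingP na; apply/nonattackingP => p q pP qP.
by apply: na; apply: PQ.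
Qed.

Lemma nonattacking_setU P Q : [disjoint P & Q] ->
  nonattacking (P :|: Q) =
  [&& nonattacking P, nonattacking Q, [disjoint [set p.1 | p in P] & [set q.1 | q in Q]]
    & [disjoint [set p.2 | p in P] & [set q.2 | q in Q]]].
Proof.
move=> PQ0; apply/idP/and4P => [na | [naP naQ rows cols]].
  have lineP p q : p \in P -> q \in Q -> (p.1 == q.1) || (p.2 == q.2) -> False.
    move=> pP qQ /(nonattackingP _ na p q) eq_pq.
    by move: (disjointFr PQ0 pP); rewrite eq_pq ?qQ // !inE ?pP ?qQ ?orbT.
  split; try by apply: nonattackingS na; rewrite (subsetUl, subsetUr).
    rewrite -setI_eq0; apply/set0Pn => -[_ /setIP[/imsetP[p pP ->] /imsetP[q qQ eq1]]].
    by apply: (lineP p q) => //; rewrite eq1 eqxx.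
  rewrite -setI_eq0; apply/set0Pn => -[_ /setIP[/imsetP[p pP ->] /imsetP[q qQ eq2]]].
  by apply: (lineP p q) => //; rewrite eq2 eqxx orbT.
have cross p q : p \in P -> q \in Q -> ~~ ((p.1 == q.1) || (p.2 == q.2)).
  move=> pP qQ; apply/orP => -[] /eqP eq_pq.
    by move: (disjointFr rows (imset_f _ pP)); rewrite eq_pq imset_f.
  by move: (disjointFr cols (imset_f _ pP)); rewrite eq_pq imset_f.
apply/nonattackingP => p q; rewrite !inE => /orP[pP | pQ] /orP[qP | qQ].
- exact: (nonattackingP _ naP).
- by move/negP: (cross p q pP qQ).
- by rewrite eq_sym (eq_sym p.2); move/negP: (cross q p qP pQ).
- exact: (nonattackingP _ naQ).
Qed.

End Placements.

Section Relabel.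
Variables (m n : nat) (s : 'I_m -> 'I_m) (t : 'I_n -> 'I_n).
Hypotheses (s_inj : injective s) (t_inj : injective t).

Definition relabel (p : cell m n) : cell m n := (s p.1, t p.2).

Lemma relabel_inj : injective relabel.
Proof. by move=> [a b] [c d] [/s_inj -> /t_inj ->]. Qed.

Lemma subset_relabel (A A' : {set cell m n}) :
  (relabel @: A \subset relabel @: A') = (A \subset A').
Proof.
apply/idP/idP => [/subsetP sub | ]; last exact: imsetS.
by apply/subsetP => p pA; rewrite -(mem_imset _ _ relabel_inj) sub ?imset_f.
Qed.

Lemma nonattacking_relabel (P : {set cell m n}) :
  nonattacking (relabel @: P) = nonattacking P.
Proof.
have same_line p q : ((relabel p).1 == (relabel q).1) = (p.1 == q.1) /\
                     ((relabel p).2 == (relabel q).2) = (p.2 == q.2).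
  by rewrite /= (inj_eq s_inj) (inj_eq t_inj).
apply/nonattackingP/nonattackingP => na.
  move=> p q pP qP; have [<- <-] := same_line p q => pq.
  by apply: relabel_inj; apply: na; rewrite ?imset_f.
move=> _ _ /imsetP[p pP ->] /imsetP[q qP ->]; have [-> ->] := same_line p q.
by move/(na p q pP qP) ->.
Qed.

Lemma rook_poly_relabel (B : {set cell m n}) : rook_poly (relabel @: B) = rook_poly B.
Proof.
rewrite !rook_polyE (reindex_inj (imset_inj relabel_inj)) /=.
apply: eq_big => [P | P _]; last by rewrite card_imset //; apply: relabel_inj.
by rewrite /rook_placement subset_relabel nonattacking_relabel.
Qed.

End Relabel.

Lemma perm_on_imset_eq (T : finType) (C A A' : {set T}) :
  A \subset C -> A' \subset C -> #|A| = #|A'| ->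
  exists2 s : {perm T}, perm_on C s & s @: A = A'.
Proof.
move: {2}#|A :\: A'| (erefl #|A :\: A'|) => k; elim: k A => [|k IHk] A diffA AC A'C AA'.
  exists 1%g; first by rewrite /perm_on; apply/subsetP => x; rewrite inE perm1 eqxx.
  rewrite (eq_imset _ (@perm1 T)) imset_id.
  by apply/eqP; rewrite eqEcard -setD_eq0 -cards_eq0 diffA eqxx -AA' leqnn.
have /set0Pn[x] : A :\: A' != set0 by rewrite -card_gt0 diffA.
have /set0Pn[y] : A' :\: A != set0.
  by rewrite -card_gt0 cardsD setIC -AA' -cardsD diffA.
rewrite !inE => /andP[yA yA'] /andP[xA' xA].
have [xC yC] : x \in C /\ y \in C by rewrite (subsetP AC) ?(subsetP A'C).
have mem_uA z : (z \in tperm x y @: A) = (tperm x y z \in A).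
  by rewrite -{1}(tpermK x y z) mem_imset //; apply: perm_inj.
have uA_diff : (tperm x y @: A) :\: A' = (A :\: A') :\ x.
  apply/setP => z; rewrite !inE mem_uA.
  case: (tpermP x y z) => [-> | -> | /eqP zx _]; last by rewrite zx.
    by rewrite (negbTE yA) andbF eqxx.
  by rewrite yA' andbF.
have [s sC <-] : exists2 s : {perm T}, perm_on C s & s @: (tperm x y @: A) = A'.
  apply: IHk => //.
  - by move: diffA; rewrite uA_diff (cardsD1 x) !inE xA xA' => -[].
  - apply/subsetP => z; rewrite mem_uA.
    by case: (tpermP x y z) => [-> | -> | _ _ /(subsetP AC)].
  - by rewrite card_imset //; apply: perm_inj.
exists (tperm x y * s)%g; last by rewrite -imset_comp; apply: eq_imset => z; rewrite permM.
apply: perm_onM sC; apply: subset_trans (tperm_on x y) _.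
by apply/subsetP => z; rewrite !inE => /orP[] /eqP ->.
Qed.

Section InclusionBoardIndependence.
Variables (m n : nat) (B : {set cell m n}) (I : {set 'I_m}) (J : {set 'I_n}).
Hypothesis B_block : is_block B I J.

Lemma mem_inclusion_board_relabel (s : {perm 'I_m}) (t : {perm 'I_n})
    (I' : {set 'I_m}) (J' : {set 'I_n}) p :
  perm_on I s -> perm_on J t ->
  (relabel s t p \in inclusion_board B I J (s @: I') (t @: J')) =
  (p \in inclusion_board B I J I' J').
Proof.
move=> sI tJ; case: B_block => I_rows_agree J_cols_agree.
case: p => a b; rewrite !inE /relabel /= !(mem_imset _ _ (@perm_inj _ _)).
rewrite (perm_closed _ sI) (perm_closed _ tJ).
have [aI | aI] := boolP (a \in I); have [bJ | bJ] := boolP (b \in J);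
  rewrite /= ?andbF ?andbT //.
- by rewrite (out_perm tJ bJ) (I_rows_agree _ a) ?(perm_closed _ sI).
- by rewrite (out_perm sI aI) (J_cols_agree _ _ b) ?(perm_closed _ tJ).
- by rewrite (out_perm sI aI) (out_perm tJ bJ).
Qed.

Lemma inclusion_board_relabel (s : {perm 'I_m}) (t : {perm 'I_n})
    (I' : {set 'I_m}) (J' : {set 'I_n}) :
  perm_on I s -> perm_on J t ->
  inclusion_board B I J (s @: I') (t @: J') = relabel s t @: inclusion_board B I J I' J'.
Proof.
move=> sI tJ; apply/setP => q.
have -> : q = relabel s t (s^-1%g q.1, t^-1%g q.2) by rewrite /relabel !permKV; case: q.
rewrite mem_imset ?mem_inclusion_board_relabel //.
by apply: relabel_inj; apply: perm_inj.
Qed.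

Lemma rook_poly_inclusion_board_indep (I1 I2 : {set 'I_m}) (J1 J2 : {set 'I_n}) :
  I1 \subset I -> I2 \subset I -> J1 \subset J -> J2 \subset J ->
  #|I1| = #|I2| -> #|J1| = #|J2| ->
  rook_poly (inclusion_board B I J I1 J1) = rook_poly (inclusion_board B I J I2 J2).
Proof.
move=> I1I I2I J1J J2J cardI cardJ.
have [s sI <-] := perm_on_imset_eq I1I I2I cardI.
have [t tJ <-] := perm_on_imset_eq J1J J2J cardJ.
by rewrite inclusion_board_relabel // rook_poly_relabel //; apply: perm_inj.
Qed.

End InclusionBoardIndependence.

Section RectExpansion.
Variables (m n : nat) (B : {set cell m n}) (I : {set 'I_m}) (J : {set 'I_n}).
Implicit Types PS Q : {set cell m n}.

Definition rect := [set p : cell m n | (p.1 \in I) && (p.2 \in J)].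

Lemma subboardE : subboard B I J = B :&: rect.
Proof. by apply/setP => p; rewrite !inE. Qed.

Lemma inclusion_boardE (I' : {set 'I_m}) (J' : {set 'I_n}) q :
  (q \in inclusion_board B I J I' J') =
  [&& q \in B, q.1 \notin I', q.2 \notin J' & q \notin rect].
Proof. by rewrite !inE !andbA. Qed.

Lemma subset_inclusion_board (I' : {set 'I_m}) (J' : {set 'I_n}) Q :
  (Q \subset inclusion_board B I J I' J') =
  [&& Q \subset B :\: rect, [disjoint [set q.1 | q in Q] & I']
    & [disjoint [set q.2 | q in Q] & J']].
Proof.
rewrite !disjoints_subset; apply/subsetP/and3P => [QB | [/subsetP QB rows cols] q qQ].
  split; apply/subsetP.
  - by move=> q /QB; rewrite inclusion_boardE in_setD => /and4P[-> _ _ ->].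
  - by move=> _ /imsetP[q /QB + ->]; rewrite in_setC inclusion_boardE => /and4P[].
  - by move=> _ /imsetP[q /QB + ->]; rewrite in_setC inclusion_boardE => /and4P[].
move: (QB q qQ) (subsetP rows _ (imset_f fst qQ)) (subsetP cols _ (imset_f snd qQ)).
by rewrite inclusion_boardE in_setD !inE => /andP[-> ->] -> ->.
Qed.

Lemma rook_placement_split PS Q : rook_placement (subboard B I J) PS ->
  [&& rook_placement B (PS :|: Q), (PS :|: Q) :&: rect == PS & (PS :|: Q) :\: rect == Q] =
  rook_placement (inclusion_board B I J [set p.1 | p in PS] [set p.2 | p in PS]) Q.
Proof.
rewrite /rook_placement subboardE subsetI => /andP[/andP[PS_B PS_R] naPS].
rewrite subset_inclusion_board ![[disjoint [set _ | _ in Q] & _]]disjoint_sym.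
apply/and3P/idP => [[/andP[PQ_B naPQ] /eqP PQ_R /eqP PQ_notR] | ].
  have QB : Q \subset B :\: rect by rewrite -PQ_notR setSD.
  have PS_Q : [disjoint PS & Q].
    rewrite disjoints_subset -PQ_notR setDE setCI setCK.
    exact: subset_trans PS_R (subsetUr _ _).
  by move: naPQ; rewrite nonattacking_setU // QB; case/and4P => _ -> -> ->.
case/andP=> /and3P[QB rows cols] naQ.
have Q_notR : [disjoint Q & rect] by rewrite disjoints_subset (subset_trans QB) ?subsetDr.
have PS_Q : [disjoint PS & Q] by rewrite disjoint_sym (disjointWr PS_R Q_notR).
rewrite nonattacking_setU // naPS naQ rows cols subUset PS_B (subset_trans QB) ?subsetDl //.
rewrite setIUl setDUl (setIidPl PS_R) (disjoint_setI0 Q_notR) setU0 (setDidPl Q_notR).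
by move: PS_R; rewrite -setD_eq0 => /eqP ->; rewrite set0U !eqxx.
Qed.

Lemma rook_poly_rect_expansion :
  rook_poly B = \sum_(PS | rook_placement (subboard B I J) PS)
    'X^#|PS| * rook_poly (inclusion_board B I J [set p.1 | p in PS] [set p.2 | p in PS]).
Proof.
rewrite rook_polyE
  (partition_big (fun P => P :&: rect) (rook_placement (subboard B I J))) /=.
  apply: eq_bigr => PS PS_S; rewrite rook_polyE mulr_sumr.
  rewrite (reindex_onto (fun Q => PS :|: Q) (fun P => P :\: rect)) /=; last first.
    by move=> P /andP[_ /eqP <-]; rewrite setID.
  apply: eq_big => [Q | Q]; first by rewrite -andbA rook_placement_split.
  case/andP => /andP[_ /eqP PQ_R] /eqP PQ_notR.
  by rewrite -exprD -(cardsID rect (PS :|: Q)) PQ_R PQ_notR.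
move=> P /andP[PB naP]; rewrite /rook_placement subboardE setSI //=.
exact: nonattackingS (subsetIl _ _) naP.
Qed.

Lemma rook_placement_subboard_lines PS : rook_placement (subboard B I J) PS ->
  [/\ [set p.1 | p in PS] \subset I, [set p.2 | p in PS] \subset J,
       #|[set p.1 | p in PS]| = #|PS| & #|[set p.2 | p in PS]| = #|PS|].
Proof.
case/andP => /subsetP PS_S naPS; rewrite card_rows_placement ?card_cols_placement //.
by split=> //; apply/subsetP => _ /imsetP[p /PS_S + ->]; rewrite !inE => /and3P[].
Qed.

End RectExpansion.

Theorem theorem3 (m n : nat) (hm : (1 <= m)%N) (hn : (1 <= n)%N)
    (B : {set cell m n}) (I : {set 'I_m}) (J : {set 'I_n}) :
  is_block B I J ->
  (forall (j : nat) (I1 I2 : {set 'I_m}) (J1 J2 : {set 'I_n}),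
      (j <= minn #|I| #|J|)%N ->
      I1 \subset I -> I2 \subset I -> J1 \subset J -> J2 \subset J ->
      #|I1| = j -> #|I2| = j -> #|J1| = j -> #|J2| = j ->
      rook_poly (inclusion_board B I J I1 J1) = rook_poly (inclusion_board B I J I2 J2))
  /\
  (forall (Ip : nat -> {set 'I_m}) (Jp : nat -> {set 'I_n}),
      (forall j : nat, (j <= minn #|I| #|J|)%N ->
         [/\ Ip j \subset I, Jp j \subset J, #|Ip j| = j & #|Jp j| = j]) ->
      rook_poly B =
      \sum_(j < (minn #|I| #|J|).+1)
         (rook_num j (subboard B I J))%:R *: 'X^j
           * rook_poly (inclusion_board B I J (Ip j) (Jp j))).
Proof.
move=> B_block; split.
  move=> j I1 I2 J1 J2 _ I1I I2I J1J J2J cI1 cI2 cJ1 cJ2.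
  by apply: rook_poly_inclusion_board_indep; rewrite ?cI1 ?cI2 ?cJ1 ?cJ2.
move=> Ip Jp IpJp.
pose F k := 'X^k * rook_poly (inclusion_board B I J (Ip k) (Jp k)).
have le_min PS : rook_placement (subboard B I J) PS -> (#|PS| <= minn #|I| #|J|)%N.
  case/rook_placement_subboard_lines => rows cols <- crows.
  by rewrite leq_min subset_leq_card //= -crows subset_leq_card.
rewrite (rook_poly_rect_expansion B I J).
transitivity (\sum_(PS | rook_placement (subboard B I J) PS) F #|PS|).
  apply: eq_bigr => PS PS_S.
  have [rows cols crows ccols] := rook_placement_subboard_lines PS_S.
  have [IpI JpJ cIp cJp] := IpJp _ (le_min PS PS_S).
  by rewrite /F (rook_poly_inclusion_board_indep B_block rows IpI cols JpJ) ?crows ?ccols.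
rewrite (sum_set_by_card F le_min).
by apply: eq_bigr => k _; rewrite -scalerAl scaler_nat.
Qed.
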